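(* Let $k\ge1$. For all $0\le y_1\le y_2\le\dots\le y_{2k-1}\le1$ we have $\widetilde H_k(y_1,\dots,y_{2k-1})\le0$, where \[ \widetilde H_k(y_1,\dots,y_{2k-1}):=\sum_{i=0}^{k-1}(1-y_{k+i})\,y_{k+i+1}\cdots y_{2k-1}\;f_k(y_1)\cdots f_k(y_i)\;-\;\prod_{i=1}^{k}f_k(y_i), \] with empty products equal to $1$.
   Context: For an integer $k\ge1$, $f_k:[0,1]\to[0,1]$ denotes the unique decreasing function satisfying $f_k(x)^k-f_k(x)^{k+1}=x^k-x^{k+1}$ for all $x\in[0,1]$; it is continuous with $f_k(0)=1$, $f_k(1)=0$. *)

From Stdlib Require Import Reals Lra Lia.
Open Scope R_scope.

Fixpoint sumR (n : nat) (F : nat -> R) : R :=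
  match n with
  | O => 0
  | S n' => sumR n' F + F n'
  end.

Fixpoint prodR (a n : nat) (F : nat -> R) : R :=
  match n with
  | O => 1
  | S n' => prodR a n' F * F (a + n')%nat
  end.

Definition is_fk (k : nat) (f : R -> R) : Prop :=
  (forall x, 0 <= x <= 1 -> 0 <= f x <= 1) /\
  (forall x y, 0 <= x <= 1 -> 0 <= y <= 1 -> x < y -> f y < f x) /\
  (forall x, 0 <= x <= 1 -> f x ^ k - f x ^ (k + 1) = x ^ k - x ^ (k + 1)).

(* H~_k(y_1,...,y_{2k-1}) with y : nat -> R, using the indices 1..2k-1. *)
Definition Htilde (k : nat) (f : R -> R) (y : nat -> R) : R :=
  sumR k (fun i =>
      (1 - y (k + i)%nat)
      * prodR (k + i + 1) (k - 1 - i) y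
      * prodR 1 i (fun j => f (y j)))
  - prodR 1 k (fun j => f (y j)).

(* Put a_j = f_k(y_j), P_m = a_1 ⋯ a_m, x = y_k, and let G_m be H~_k + P_k with
   its sum truncated to m terms (the tails y_{k+i+1} ⋯ y_{k+m-1} shortened
   accordingly), so that G_{m+1} = y_{k+m} G_m + (1 - y_{k+m}) P_m and
   H~_k = G_k - P_k.  With S_m = Σ_{i<m} x^(m-1-i) P_i we show
   G_m ≤ (1-x) S_m ≤ P_m.  Given the second inequality, the first follows by
   induction from y_{k+m} ≥ x.  For the second, a_j ≥ b := f_k(x) reduces it to
   the constant sequence a_j = b, where
     (b - x) (b^m - (1-x) Σ_{i<m} x^(m-1-i) b^i) = x^m (1-x) - b^m (1-b),
   and the defining relation b^k (1-b) = x^k (1-x) gives the right-hand side the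
   sign of b - x.  If b = x, then x is the fixed point of f_k, which lies to the
   right of the maximum k/(k+1) of t^k (1-t). *)

From Stdlib Require Import Reals Lra Lia Psatz.
Open Scope R_scope.

Lemma pow_succ_sub_ge (n : nat) (u v : R) :
  0 <= u <= v -> INR (S n) * u ^ n * (v - u) <= v ^ S n - u ^ S n.
Proof.
  intros Huv. induction n as [|n IH].
  - simpl. lra.
  - rewrite S_INR. cbn [pow] in *.
    assert (0 <= u ^ n) by (apply pow_le; lra).
    assert (v * (INR (S n) * u ^ n * (v - u)) <= v * (v * v ^ n - u * u ^ n))
      by (apply Rmult_le_compat_l; lra).
    assert (0 <= (v - u) * (INR (S n) * u ^ n * (v - u)))
      by (apply Rmult_le_pos; [lra|]; apply Rmult_le_pos; [|lra];
          apply Rmult_le_pos; [apply pos_INR | lra]).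
    nra.
Qed.

Lemma pow_sub_pow_succ_lt (k : nat) (u v : R) :
  (1 <= k)%nat -> 0 < u < v -> (INR k + 1) * v <= INR k ->
  u ^ k - u ^ (k + 1) < v ^ k - v ^ (k + 1).
Proof.
  intros Hk Huv Hv. destruct k as [|n]; [lia|].
  pose proof (pow_succ_sub_ge n u v ltac:(lra)) as Hlow.
  rewrite S_INR in Hv. rewrite S_INR in Hlow.
  replace (S n + 1)%nat with (S (S n)) by lia. cbn [pow] in *.
  assert (Hp : 0 < u ^ n) by (apply pow_lt; lra).
  assert (Hv1 : 0 <= 1 - v) by (pose proof (pos_INR n); nra).
  assert ((INR n + 1) * u ^ n * (v - u) * (1 - v) <= (v * v ^ n - u * u ^ n) * (1 - v))
    by (apply Rmult_le_compat_r; lra).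
  assert (0 < (v - u) * u ^ n * ((INR n + 1) * (1 - v) - u))
    by (apply Rmult_lt_0_compat; [apply Rmult_lt_0_compat|]; nra).
  nra.
Qed.

Lemma chain_le (y : nat -> R) (n : nat) :
  (forall i, (1 <= i)%nat -> (i < n)%nat -> y i <= y (S i)) ->
  forall i j, (1 <= i)%nat -> (i <= j <= n)%nat -> y i <= y j.
Proof.
  intros Hstep i j Hi Hj. induction j as [|j IH]; [lia|].
  destruct (Nat.eq_dec i (S j)) as [->|Hne]; [lra|].
  apply Rle_trans with (y j); [apply IH; lia | apply Hstep; lia].
Qed.

Lemma prodR_nonneg (a m : nat) (F : nat -> R) :
  (forall j, (a <= j < a + m)%nat -> 0 <= F j) -> 0 <= prodR a m F.
Proof.
  induction m as [|m IH]; intros HF; cbn [prodR]; [lra|].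
  apply Rmult_le_pos; [apply IH; intros; apply HF; lia | apply HF; lia].
Qed.

Lemma prodR_const (a m : nat) (c : R) : prodR a m (fun _ => c) = c ^ m.
Proof. induction m as [|m IH]; cbn [prodR pow]; [|rewrite IH]; ring. Qed.

(* [geo_sum x c m = Σ_{i<m} x^(m-1-i) c_i], in Horner form. *)
Fixpoint geo_sum (x : R) (c : nat -> R) (m : nat) : R :=
  match m with
  | O => 0
  | S m' => x * geo_sum x c m' + c m'
  end.

Lemma geo_sum_ext (x : R) (c d : nat -> R) (m : nat) :
  (forall i, (i < m)%nat -> c i = d i) -> geo_sum x c m = geo_sum x d m.
Proof.
  induction m as [|m IH]; intros Hcd; cbn [geo_sum]; [reflexivity|].
  rewrite IH by (intros; apply Hcd; lia). rewrite Hcd by lia. reflexivity.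
Qed.

Lemma geo_sum_nonneg (x : R) (c : nat -> R) (m : nat) :
  0 <= x -> (forall i, (i < m)%nat -> 0 <= c i) -> 0 <= geo_sum x c m.
Proof.
  intros Hx. induction m as [|m IH]; intros Hc; cbn [geo_sum]; [lra|].
  assert (0 <= geo_sum x c m) by (apply IH; intros; apply Hc; lia).
  assert (0 <= c m) by (apply Hc; lia).
  nra.
Qed.

Lemma prodR_mul_geo_sum_le (x : R) (a b : nat -> R) (m : nat) :
  0 <= x -> (forall j, (1 <= j <= m)%nat -> 0 <= b j <= a j) ->
  prodR 1 m b * geo_sum x (fun i => prodR 1 i a) m
  <= prodR 1 m a * geo_sum x (fun i => prodR 1 i b) m.
Proof.
  intros Hx. induction m as [|m IH]; intros Hab; cbn [geo_sum prodR]; [lra|].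
  assert (Hnn : forall c : nat -> R, (forall j, (1 <= j <= m)%nat -> 0 <= c j) ->
            forall i, (i <= m)%nat -> 0 <= prodR 1 i c)
    by (intros c Hc i Hi; apply prodR_nonneg; intros; apply Hc; lia).
  assert (HA : 0 <= prodR 1 m a)
    by (apply Hnn; [intros j Hj; pose proof (Hab j ltac:(lia)); lra | lia]).
  assert (HB : 0 <= prodR 1 m b) by (apply Hnn; [intros j Hj; apply Hab; lia | lia]).
  assert (HSb : 0 <= geo_sum x (fun i => prodR 1 i b) m)
    by (apply geo_sum_nonneg; [lra | intros; apply Hnn; [intros j Hj; apply Hab; lia | lia]]).
  specialize (IH ltac:(intros; apply Hab; lia)).
  destruct (Hab (1 + m)%nat ltac:(lia)) as [Hb Hba].
  set (A := prodR 1 m a) in *. set (B := prodR 1 m b) in *.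
  set (Sa := geo_sum x (fun i => prodR 1 i a) m) in *.
  set (Sb := geo_sum x (fun i => prodR 1 i b) m) in *.
  assert (b (1 + m)%nat * x * (B * Sa) <= b (1 + m)%nat * x * (A * Sb))
    by (apply Rmult_le_compat_l; [apply Rmult_le_pos|]; lra).
  assert (0 <= (a (1 + m)%nat - b (1 + m)%nat) * x * (A * Sb))
    by (apply Rmult_le_pos; [apply Rmult_le_pos|apply Rmult_le_pos]; lra).
  assert (0 <= (a (1 + m)%nat - b (1 + m)%nat) * (A * B))
    by (apply Rmult_le_pos; [|apply Rmult_le_pos]; lra).
  nra.
Qed.

Lemma sub_mul_geo_sum_pow (x b : R) (m : nat) :
  (b - x) * (b ^ m - (1 - x) * geo_sum x (pow b) m) = x ^ m * (1 - x) - b ^ m * (1 - b).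
Proof.
  induction m as [|m IH]; cbn [geo_sum pow]; [ring|].
  transitivity (x * ((b - x) * (b ^ m - (1 - x) * geo_sum x (pow b) m))
                + (b - x) * b ^ m * (b - 1)); [ring|].
  rewrite IH. ring.
Qed.

Lemma geo_sum_pow_diag (x : R) (m : nat) : x * geo_sum x (pow x) m = INR m * x ^ m.
Proof.
  induction m as [|m IH]; cbn [geo_sum pow]; [simpl; ring|].
  rewrite S_INR.
  transitivity (x * (x * geo_sum x (pow x) m) + x * x ^ m); [ring|].
  rewrite IH. ring.
Qed.

Lemma sub_mul_pow_sub_nonneg (b x : R) (d : nat) :
  0 <= b -> 0 <= x -> 0 <= (b - x) * (b ^ d - x ^ d).
Proof.
  intros Hb Hx. destruct (Rle_or_lt x b) as [Hxb|Hbx].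
  - assert (x ^ d <= b ^ d) by (apply pow_incr; lra).
    apply Rmult_le_pos; lra.
  - assert (b ^ d <= x ^ d) by (apply pow_incr; lra).
    nra.
Qed.

Lemma geo_sum_pow_le_of_ne (k m : nat) (x b : R) :
  0 <= x <= 1 -> 0 < b -> b <> x -> (m <= k)%nat ->
  b ^ k - b ^ (k + 1) = x ^ k - x ^ (k + 1) ->
  (1 - x) * geo_sum x (pow b) m <= b ^ m.
Proof.
  intros Hx Hb Hbx Hm Hg.
  destruct (Nat.le_exists_sub m k Hm) as [d [-> _]].
  set (e := b ^ m - (1 - x) * geo_sum x (pow b) m).
  assert (He : (b - x) * e = x ^ m * (1 - x) - b ^ m * (1 - b))
    by apply sub_mul_geo_sum_pow.
  rewrite !pow_add, pow_1 in Hg.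
  assert (Hkey : b ^ d * (b - x) ^ 2 * e = (1 - x) * x ^ m * ((b - x) * (b ^ d - x ^ d)))
    by (transitivity (b ^ d * (b - x) * ((b - x) * e)); [ring|]; rewrite He; nra).
  assert (Hc : 0 < b ^ d * (b - x) ^ 2).
  { apply Rmult_lt_0_compat; [apply pow_lt; lra|].
    assert (b - x <> 0) by lra. simpl. nra. }
  assert (0 <= b ^ d * (b - x) ^ 2 * e).
  { rewrite Hkey. apply Rmult_le_pos; [apply Rmult_le_pos; [lra | apply pow_le; lra]|].
    apply sub_mul_pow_sub_nonneg; lra. }
  assert (0 <= e) by nra.
  unfold e in *. lra.
Qed.

Lemma geo_sum_pow_diag_le (k m : nat) (x : R) :
  0 < x <= 1 -> (m <= k)%nat -> INR k <= (INR k + 1) * x ->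
  (1 - x) * geo_sum x (pow x) m <= x ^ m.
Proof.
  intros Hx Hm Hk.
  assert (Hmk : INR m <= INR k) by (apply le_INR; exact Hm).
  assert (Hlin : 0 <= (INR m + 1) * x - INR m) by nra.
  assert (Hxe : x * (x ^ m - (1 - x) * geo_sum x (pow x) m)
                = x ^ m * ((INR m + 1) * x - INR m)).
  { rewrite Rmult_minus_distr_l.
    replace (x * ((1 - x) * geo_sum x (pow x) m)) with ((1 - x) * (x * geo_sum x (pow x) m))
      by ring.
    rewrite geo_sum_pow_diag. ring. }
  assert (0 <= x * (x ^ m - (1 - x) * geo_sum x (pow x) m))
    by (rewrite Hxe; apply Rmult_le_pos; [apply pow_le|]; lra).
  nra.
Qed.

Section Fk.

Variables (k : nat) (f : R -> R).
Hypothesis Hf : is_fk k f.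

Lemma fk_range (x : R) : 0 <= x <= 1 -> 0 <= f x <= 1.
Proof. apply Hf. Qed.

Lemma fk_antitone (u v : R) : 0 <= u -> u <= v -> v <= 1 -> f v <= f u.
Proof.
  intros Hu Huv Hv. destruct (Req_dec u v) as [->|Hne]; [lra|].
  apply Rlt_le, Hf; lra.
Qed.

Lemma fk_pos (x : R) : 0 <= x < 1 -> 0 < f x.
Proof.
  intros Hx. pose proof (fk_range 1 ltac:(lra)).
  assert (f 1 < f x) by (apply Hf; lra). lra.
Qed.

Lemma fk_fixpoint_ge (x : R) : 0 <= x <= 1 -> f x = x -> INR k <= (INR k + 1) * x.
Proof.
  intros Hx Hfx.
  destruct (Nat.eq_dec k 0) as [->|Hk0]; [simpl; lra|].
  assert (HK : 1 <= INR k) by (apply (le_INR 1); lia).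
  destruct (Rle_or_lt (INR k) ((INR k + 1) * x)) as [|Hlt]; [assumption | exfalso].
  (* s lies strictly between x and the maximiser k/(k+1) of t^k - t^(k+1). *)
  set (s := (INR k + (INR k + 1) * x) / (2 * (INR k + 1))).
  assert (Hs : (INR k + 1) * s = (INR k + (INR k + 1) * x) / 2) by (unfold s; field; lra).
  assert (Hxs : x < s) by nra.
  assert (Hs1 : s < 1) by nra.
  assert (Hfs : f s < f x) by (apply Hf; lra).
  pose proof (fk_pos s ltac:(lra)).
  pose proof (pow_sub_pow_succ_lt k (f s) s ltac:(lia) ltac:(lra) ltac:(lra)).
  pose proof (proj2 (proj2 Hf) s ltac:(lra)). lra.
Qed.

Lemma fk_geo_sum_pow_le (x : R) (m : nat) :
  0 <= x < 1 -> (m <= k)%nat -> (1 - x) * geo_sum x (pow (f x)) m <= f x ^ m.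
Proof.
  intros Hx Hm. pose proof (fk_pos x Hx).
  destruct (Req_dec (f x) x) as [Hfx|Hne].
  - rewrite Hfx. apply (geo_sum_pow_diag_le k); [lra | exact Hm |].
    apply fk_fixpoint_ge; lra.
  - apply (geo_sum_pow_le_of_ne k); try assumption; [lra|].
    apply Hf. lra.
Qed.

Lemma fk_geo_sum_prodR_le (x : R) (a : nat -> R) (m : nat) :
  0 <= x <= 1 -> (m <= k)%nat -> (forall j, (1 <= j <= m)%nat -> f x <= a j) ->
  (1 - x) * geo_sum x (fun i => prodR 1 i a) m <= prodR 1 m a.
Proof.
  intros Hx Hm Ha. pose proof (fk_range x Hx).
  assert (HA : 0 <= prodR 1 m a)
    by (apply prodR_nonneg; intros j Hj; pose proof (Ha j ltac:(lia)); lra).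
  destruct (Req_dec x 1) as [->|Hx1]; [lra|].
  assert (Hb : 0 < f x) by (apply fk_pos; lra).
  pose proof (prodR_mul_geo_sum_le x a (fun _ => f x) m ltac:(lra)
                ltac:(intros j Hj; pose proof (Ha j Hj); lra)) as Hcmp.
  rewrite prodR_const, (geo_sum_ext x (fun i => prodR 1 i (fun _ => f x)) (pow (f x)))
    in Hcmp by (intros; apply prodR_const).
  pose proof (fk_geo_sum_pow_le x m ltac:(lra) Hm).
  assert (Hbm : 0 < f x ^ m) by (apply pow_lt; lra).
  assert (f x ^ m * ((1 - x) * geo_sum x (fun i => prodR 1 i a) m)
          <= f x ^ m * prodR 1 m a) by nra.
  apply (Rmult_le_reg_l (f x ^ m)); assumption.
Qed.

End Fk.

Lemma sumR_ext (n : nat) (F G : nat -> R) :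
  (forall i, (i < n)%nat -> F i = G i) -> sumR n F = sumR n G.
Proof.
  induction n as [|n IH]; intros HFG; cbn [sumR]; [reflexivity|].
  rewrite IH by (intros; apply HFG; lia). rewrite HFG by lia. reflexivity.
Qed.

Lemma sumR_scal (n : nat) (c : R) (F : nat -> R) :
  sumR n (fun i => c * F i) = c * sumR n F.
Proof. induction n as [|n IH]; cbn [sumR]; [|rewrite IH]; ring. Qed.

Definition Htilde_sum (k m : nat) (y a : nat -> R) : R :=
  sumR m (fun i => (1 - y (k + i)%nat) * prodR (k + i + 1) (m - 1 - i) y * prodR 1 i a).

Lemma Htilde_eq_sum (k : nat) (f : R -> R) (y : nat -> R) :
  Htilde k f y = Htilde_sum k k y (fun j => f (y j)) - prodR 1 k (fun j => f (y j)).
Proof. reflexivity. Qed.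

Lemma Htilde_sum_succ (k m : nat) (y a : nat -> R) :
  Htilde_sum k (S m) y a
  = y (k + m)%nat * Htilde_sum k m y a + (1 - y (k + m)%nat) * prodR 1 m a.
Proof.
  unfold Htilde_sum. cbn [sumR].
  replace (S m - 1 - m)%nat with 0%nat by lia. cbn [prodR].
  rewrite <- sumR_scal.
  rewrite (sumR_ext m _ (fun i => y (k + m)%nat *
     ((1 - y (k + i)%nat) * prodR (k + i + 1) (m - 1 - i) y * prodR 1 i a))); [ring|].
  intros i Hi. replace (S m - 1 - i)%nat with (S (m - 1 - i)) by lia.
  cbn [prodR]. replace (k + i + 1 + (m - 1 - i))%nat with (k + m)%nat by lia. ring.
Qed.

Lemma Htilde_sum_le (k m : nat) (y a : nat -> R) (x : R) :
  0 <= x -> (forall i, (i < m)%nat -> x <= y (k + i)%nat) ->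
  (forall i, (i < m)%nat -> (1 - x) * geo_sum x (fun j => prodR 1 j a) i <= prodR 1 i a) ->
  Htilde_sum k m y a <= (1 - x) * geo_sum x (fun i => prodR 1 i a) m.
Proof.
  intros Hx. induction m as [|m IH]; intros Hy HS.
  - unfold Htilde_sum. simpl. lra.
  - rewrite Htilde_sum_succ. cbn [geo_sum].
    specialize (IH ltac:(intros; apply Hy; lia) ltac:(intros; apply HS; lia)).
    pose proof (Hy m ltac:(lia)). pose proof (HS m ltac:(lia)).
    set (G := Htilde_sum k m y a) in *. set (P := prodR 1 m a) in *.
    set (S := geo_sum x (fun i => prodR 1 i a) m) in *.
    (* G_{m+1} = P - y (P - G) with P - G >= 0, so y may be lowered to x. *)
    assert (0 <= (y (k + m)%nat - x) * (P - G)) by (apply Rmult_le_pos; lra).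
    assert (x * G <= x * ((1 - x) * S)) by (apply Rmult_le_compat_l; lra).
    nra.
Qed.

Theorem mainTheorem6 (k : nat) (f : R -> R) (y : nat -> R) :
  (1 <= k)%nat ->
  is_fk k f ->
  0 <= y 1%nat ->
  (forall i : nat, (1 <= i)%nat -> (i < 2 * k - 1)%nat -> y i <= y (S i)) ->
  y (2 * k - 1)%nat <= 1 ->
  Htilde k f y <= 0.
Proof.
  intros Hk Hf Hy1 Hstep Hyend.
  pose proof (chain_le y (2 * k - 1) Hstep) as Hmono.
  assert (Hy : forall i, (1 <= i <= 2 * k - 1)%nat -> 0 <= y i <= 1).
  { intros i Hi. split.
    - apply Rle_trans with (y 1%nat); [lra | apply Hmono; lia].
    - apply Rle_trans with (y (2 * k - 1)%nat); [apply Hmono; lia | lra]. }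
  set (x := y k). set (a := fun j => f (y j)).
  assert (Hx : 0 <= x <= 1) by (apply Hy; lia).
  assert (Hgeo : forall m, (m <= k)%nat ->
            (1 - x) * geo_sum x (fun i => prodR 1 i a) m <= prodR 1 m a).
  { intros m Hm. apply (fk_geo_sum_prodR_le k f Hf); [exact Hx | exact Hm |].
    intros j Hj. pose proof (Hy j ltac:(lia)).
    apply (fk_antitone k f Hf); [lra | apply Hmono; lia | lra]. }
  assert (Hsum : Htilde_sum k k y a <= (1 - x) * geo_sum x (fun i => prodR 1 i a) k).
  { apply Htilde_sum_le; [lra | | intros; apply Hgeo; lia].
    intros i Hi. apply Hmono; lia. }
  rewrite Htilde_eq_sum. fold a. pose proof (Hgeo k (le_n k)). lra.
Qed.
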